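(* Let $W \in \mathbb{R}^{m \times n}$ have a directed spanning set of $\mathbb{R}^n$ with respect to every $x \in \mathbb{R}^n$. Then there exists $C(W) > 0$ such that for all $x_0, x_1 \in \mathbb{R}^n$, $$\|\operatorname{ReLU}(Wx_0) - \operatorname{ReLU}(Wx_1)\|_2 \geq C(W)\, \|x_0 - x_1\|_2,$$ where one may take $C(W) = \frac{1}{\sqrt{2m}} \min_{x \in \mathbb{R}^n} \sigma\big(W|_{S(x,W)}\big)$.
   Context: $\operatorname{ReLU}(y)=\max(y,0)$ componentwise. For $W$ with rows $w_1,\dots,w_m$ and $x\in\mathbb{R}^n$, $S(x,W) = \{ j \in \{1,\dots,m\} : \langle w_j, x\rangle \geq 0\}$; for an index set $\mathcal{I}$, $W|_{\mathcal{I}}$ is the $m\times n$ matrix whose $j$-th row equals $w_j$ if $j\in\mathcal{I}$ and is zero otherwise. $\sigma(M)$ denotes the smallest singular value of $M$ (i.e. $\min_{\|x\|_2=1}\|Mx\|_2$). $W$ has a directed spanning set of $\mathbb{R}^n$ w.r.t. $x$ if the rows $\{w_j : j \in S(x,W)\}$ span $\mathbb{R}^n$. *)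

From HB Require Import structures.
From mathcomp Require Import all_boot all_order all_algebra.
From mathcomp Require Import classical_sets boolp reals.
Set Implicit Arguments. Unset Strict Implicit. Unset Printing Implicit Defensive.
Import Order.TTheory GRing.Theory Num.Theory.
Local Open Scope ring_scope.
Local Open Scope classical_set_scope.

Section Defs.
Variable R : realType.

Definition norm2 (k : nat) (v : 'cV[R]_k) : R :=
  Num.sqrt (\sum_(i < k) v i 0 ^+ 2).

Definition relu (k : nat) (v : 'cV[R]_k) : 'cV[R]_k :=
  \col_i Num.max (v i 0) 0.

Definition actset (m n : nat) (x : 'cV[R]_n) (W : 'M[R]_(m, n)) : {set 'I_m} :=
  [set j | 0 <= (W *m x) j 0].

Definition restr (m n : nat) (W : 'M[R]_(m, n)) (I : {set 'I_m}) : 'M[R]_(m, n) :=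
  \matrix_(j, k) (if j \in I then W j k else 0).

Definition sigma_min (m n : nat) (M : 'M[R]_(m, n)) : R :=
  inf [set norm2 (M *m x) | x in [set x : 'cV[R]_n | norm2 x = 1]].

Definition directed_spanning (m n : nat) (W : 'M[R]_(m, n)) (x : 'cV[R]_n) : Prop :=
  forall v : 'rV[R]_n, exists c : 'I_m -> R,
    v = \sum_(j in actset x W) c j *: row j W.

Definition CW (m n : nat) (W : 'M[R]_(m, n)) : R :=
  (Num.sqrt (2 * m%:R))^-1 *
  inf [set sigma_min (restr W (actset x W)) | x in [set: 'cV[R]_n]].

End Defs.

From HB Require Import structures.
From mathcomp Require Import all_boot all_order all_algebra.
From mathcomp Require Import classical_sets boolp reals.
From mathcomp Require Import lra zify.
Set Implicit Arguments. Unset Strict Implicit. Unset Printing Implicit Defensive.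
Import Order.TTheory GRing.Theory Num.Theory.
Local Open Scope ring_scope.

(** For [j] in [S(x0 + x1, W)] the pre-activations [a = <w_j, x0>] and
    [b = <w_j, x1>] satisfy [a + b >= 0], and then
    [|a - b| <= 2 |ReLU a - ReLU b|].  Summing over these rows gives
    [||W|_S (x0 - x1)|| <= 2 ||ReLU(W x0) - ReLU(W x1)||], while
    [||W|_S d|| >= sigma(W|_S) ||d||].  Each [sigma(W|_S(x))] is positive because
    the active rows span, i.e. [W|_S(x)] has a left inverse, and only finitely
    many active sets occur, so their infimum [mu] is positive.  Finally
    [m >= 2]: were [w_1] the only row, spanning at [x = -w_1] would need it
    active and nonzero, but [<w_1, -w_1> >= 0] forces [w_1 = 0].  Hence
    [mu / sqrt(2m) <= mu / 2]. *)

Section LowerLipschitz.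
Variable R : realType.
Implicit Types (p q : nat).

Lemma norm2_ge0 p (v : 'cV[R]_p) : 0 <= norm2 v.
Proof. exact: sqrtr_ge0. Qed.

Lemma norm2_cV0 (v : 'cV[R]_0) : norm2 v = 0.
Proof. by rewrite /norm2 big_ord0 sqrtr0. Qed.

Lemma norm2Z p (c : R) (v : 'cV[R]_p) : norm2 (c *: v) = `|c| * norm2 v.
Proof.
rewrite /norm2 (eq_bigr (fun i => c ^+ 2 * v i 0 ^+ 2)); last first.
  by move=> i _; rewrite mxE exprMn.
by rewrite -mulr_sumr sqrtrM ?sqr_ge0 // sqrtr_sqr.
Qed.

Lemma norm2_delta p (i : 'I_p) : norm2 (delta_mx i 0 : 'cV[R]_p) = 1.
Proof.
rewrite /norm2 (bigD1 i) //= big1 ?addr0 => [|k /negbTE ki].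
  by rewrite mxE !eqxx expr1n sqrtr1.
by rewrite mxE ki expr0n.
Qed.

Lemma norm_coord_le_norm2 p (v : 'cV[R]_p) i : `|v i 0| <= norm2 v.
Proof.
rewrite -sqrtr_sqr /norm2 ler_sqrt; last by apply: sumr_ge0 => k _; exact: sqr_ge0.
by rewrite (bigD1 i) //= lerDl; apply: sumr_ge0 => k _; exact: sqr_ge0.
Qed.

Lemma norm2_le_coordwise p (u v : 'cV[R]_p) (c : R) : 0 <= c ->
  (forall i, u i 0 ^+ 2 <= c ^+ 2 * v i 0 ^+ 2) -> norm2 u <= c * norm2 v.
Proof.
move=> c0 uv; rewrite -[c]ger0_norm // -norm2Z /norm2 ler_sqrt; last first.
  by apply: sumr_ge0 => i _; exact: sqr_ge0.
by apply: ler_sum => i _; rewrite mxE exprMn; exact: uv.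
Qed.

Lemma norm2_mulmx_le p q (A : 'M[R]_(p, q)) (y : 'cV[R]_q) :
  norm2 (A *m y) <= Num.sqrt (\sum_i (\sum_j `|A i j|) ^+ 2) * norm2 y.
Proof.
have y_ge0 : 0 <= \sum_i y i 0 ^+ 2 by apply: sumr_ge0 => i _; exact: sqr_ge0.
rewrite /norm2 -sqrtrM; last by apply: sumr_ge0 => i _; exact: sqr_ge0.
rewrite ler_sqrt; last by rewrite mulr_ge0 // sumr_ge0 // => i _; exact: sqr_ge0.
rewrite -(sqr_sqrtr y_ge0) mulr_suml.
apply: ler_sum => i _; set B := \sum_j `|A i j|.
have coord_le : `|(A *m y) i 0| <= B * norm2 y.
  rewrite mxE /B mulr_suml; apply: le_trans (ler_norm_sum _ _ _) _.
  apply: ler_sum => j _; rewrite normrM ler_wpM2l //.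
  exact: norm_coord_le_norm2.
have := normr_ge0 ((A *m y) i 0).
rewrite -exprMn -/(norm2 y) -[_ ^+ 2]real_normK ?num_real //; nra.
Qed.

Lemma inf_ge0 (E : set R) : (forall y, E y -> 0 <= y) -> 0 <= inf E.
Proof.
move=> E_ge0; have [[E0 _]|/inf_out->//] := pselect (has_inf E).
by apply: lb_le_inf => // y /E_ge0.
Qed.

Lemma sigma_min_ge0 p q (M : 'M[R]_(p, q)) : 0 <= sigma_min M.
Proof. by apply: inf_ge0 => _ [x _ <-]; exact: norm2_ge0. Qed.

Lemma sigma_min_le p q (M : 'M[R]_(p, q)) (d : 'cV[R]_q) :
  sigma_min M * norm2 d <= norm2 (M *m d).
Proof.
have [->|d_neq0] := eqVneq (norm2 d) 0; first by rewrite mulr0 norm2_ge0.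
have d_gt0 : 0 < norm2 d by rewrite lt0r d_neq0 norm2_ge0.
pose u := (norm2 d)^-1 *: d.
have u_unit : norm2 u = 1 by rewrite norm2Z ger0_norm ?invr_ge0 ?norm2_ge0 // mulVf.
have : sigma_min M <= norm2 (M *m u).
  by apply: ge_inf; [exists 0 => _ [x _ <-]; exact: norm2_ge0 | exists u].
rewrite /u -scalemxAr norm2Z ger0_norm ?invr_ge0 ?norm2_ge0 //.
by rewrite -(ler_pM2r d_gt0) mulrAC mulVf // mul1r.
Qed.

Lemma sigma_min_ge p q (M : 'M[R]_(p, q)) (c : R) : (0 < q)%N ->
  (forall x, c * norm2 x <= norm2 (M *m x)) -> c <= sigma_min M.
Proof.
move=> q_gt0 Mc; apply: lb_le_inf.
  pose e : 'cV[R]_q := delta_mx (Ordinal q_gt0) 0.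
  by exists (norm2 (M *m e)), e; rewrite //= norm2_delta.
by move=> _ [x /= x_unit <-]; rewrite -[c]mulr1 -x_unit.
Qed.

Lemma sigma_min_gt0_left_invertible p q (M : 'M[R]_(p, q)) (L : 'M[R]_(q, p)) :
  (0 < q)%N -> L *m M = 1%:M -> 0 < sigma_min M.
Proof.
move=> q_gt0 LM; pose K := Num.sqrt (\sum_i (\sum_j `|L i j|) ^+ 2).
have K_ge0 : 0 <= K by exact: sqrtr_ge0.
have bound x : norm2 x <= K * norm2 (M *m x).
  by rewrite -{1}[x]mul1mx -LM -mulmxA; exact: norm2_mulmx_le.
apply: (@lt_le_trans _ _ (K + 1)^-1); first by rewrite invr_gt0; lra.
apply: sigma_min_ge => // x; have := bound x; have := norm2_ge0 (M *m x).
rewrite [_^-1 * _]mulrC ler_pdivrMr; [nra | lra].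
Qed.

Lemma inf_image_finite_gt0 (T : Type) (F : finType) (h : T -> F) (g : F -> R)
    (x0 : T) :
  (forall x, 0 < g (h x)) -> 0 < inf [set g (h x) | x in [set: T]].
Proof.
move=> gh_gt0.
pose g' I := if `[< exists x, h x = I >] then g I else 1.
have g'_gt0 I : 0 < g' I by rewrite /g'; case: asboolP => [[x <-]|_] //; exact: ltr01.
apply: (@lt_le_trans _ _ (\big[Order.min/1]_I g' I)); first exact: lt_bigmin.
apply: lb_le_inf; first by exists (g (h x0)), x0.
move=> _ [x _ <-]; apply: le_trans (bigmin_le _ (h x) _) _.
by rewrite /g'; case: asboolP => // -[]; exists x.
Qed.

Lemma sqrB_le_sqr_maxB (a b : R) : 0 <= a + b ->
  (a - b) ^+ 2 <= 2 ^+ 2 * (Num.max a 0 - Num.max b 0) ^+ 2.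
Proof.
move=> ab_ge0; rewrite !maxEle.
by case: (leP a 0) => ?; case: (leP b 0) => ?; have := sqr_ge0 (a - b); nra.
Qed.

Section ActiveRows.
Variables (m n : nat) (W : 'M[R]_(m, n)).

Lemma row_restr (I : {set 'I_m}) j :
  row j (restr W I) = if j \in I then row j W else 0.
Proof. by apply/rowP => k; rewrite !mxE; case: ifP; rewrite ?mxE. Qed.

Lemma restr_mulmxE (I : {set 'I_m}) (v : 'cV[R]_n) j :
  (restr W I *m v) j 0 = if j \in I then (W *m v) j 0 else 0.
Proof.
rewrite !mxE; case: ifP => jI; first by apply: eq_bigr => k _; rewrite mxE jI.
by rewrite big1 // => k _; rewrite mxE jI mul0r.
Qed.

Lemma restr_left_invertible (I : {set 'I_m}) :
  (forall v : 'rV[R]_n, exists c : 'I_m -> R, v = \sum_(j in I) c j *: row j W) ->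
  exists L : 'M[R]_(n, m), L *m restr W I = 1%:M.
Proof.
move=> span.
have /choice [c ec] : forall k : 'I_n, exists c : 'I_m -> R,
  'e_k = \sum_(j in I) c j *: row j W by move=> k; exact: span.
exists (\matrix_(k, j) c k j); apply/row_matrixP => k.
rewrite row_mul row1 ec mulmx_sum_row [RHS]big_mkcond /=; apply: eq_bigr => j _.
by rewrite row_restr !mxE; case: ifP; rewrite ?scaler0.
Qed.

Lemma norm2_restr_active_le (x0 x1 : 'cV[R]_n) :
  norm2 (restr W (actset (x0 + x1) W) *m (x0 - x1))
  <= 2 * norm2 (relu (W *m x0) - relu (W *m x1)).
Proof.
apply: norm2_le_coordwise => // j; rewrite restr_mulmxE inE.
rewrite mulmxDr mulmxBr !mxE.
case: ifP => [|_]; first exact: sqrB_le_sqr_maxB.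
by rewrite expr0n mulr_ge0 ?sqr_ge0.
Qed.

Definition min_active_sigma : R :=
  inf [set sigma_min (restr W (actset x W)) | x in [set: 'cV[R]_n]].

Lemma CWE : CW W = (Num.sqrt (2 * m%:R))^-1 * min_active_sigma.
Proof. by []. Qed.

Lemma min_active_sigma_ge0 : 0 <= min_active_sigma.
Proof. by apply: inf_ge0 => _ [x _ <-]; exact: sigma_min_ge0. Qed.

Lemma min_active_sigma_le x : min_active_sigma <= sigma_min (restr W (actset x W)).
Proof.
apply: ge_inf; last by exists x.
by exists 0 => _ [y _ <-]; exact: sigma_min_ge0.
Qed.

Lemma min_active_sigma_gt0 : (0 < n)%N ->
  (forall x, directed_spanning W x) -> 0 < min_active_sigma.
Proof.
move=> n_gt0 span; rewrite /min_active_sigma.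
apply: (@inf_image_finite_gt0 _ _ (fun x => actset x W)
  (fun I => sigma_min (restr W I)) 0) => x.
have [L LW] := restr_left_invertible (span x).
exact: sigma_min_gt0_left_invertible LW.
Qed.

Lemma min_active_sigma_lipschitz (x0 x1 : 'cV[R]_n) :
  min_active_sigma * norm2 (x0 - x1)
  <= 2 * norm2 (relu (W *m x0) - relu (W *m x1)).
Proof.
apply: le_trans (norm2_restr_active_le x0 x1).
apply: le_trans (sigma_min_le _ _).
by rewrite ler_wpM2r ?norm2_ge0 ?min_active_sigma_le.
Qed.

Lemma row_active_at_opp_row j : j \in actset (- (row j W)^T) W -> row j W = 0.
Proof.
rewrite inE mulmxN mxE oppr_ge0 mxE.
under eq_bigr => k _ do rewrite !mxE -expr2.
move=> sum_le0; have sum0 : \sum_k W j k ^+ 2 = 0.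
  by apply/eqP; rewrite eq_le sum_le0 sumr_ge0 // => k _; exact: sqr_ge0.
apply/rowP => k; rewrite !mxE; apply/eqP; rewrite -sqrf_eq0; apply/eqP.
by apply: (psumr_eq0P _ sum0) => // i _; exact: sqr_ge0.
Qed.

Lemma directed_spanning_active_row_neq0 x : (0 < n)%N ->
  directed_spanning W x -> exists2 j, j \in actset x W & row j W != 0.
Proof.
move=> n_gt0 span; have [c one_span] := span (const_mx 1).
have [//|no_row] := pselect (exists2 j, j \in actset x W & row j W != 0).
have : const_mx 1 = 0 :> 'rV[R]_n.
  rewrite one_span big1 // => j j_act.
  have [->|row_neq0] := eqVneq (row j W) 0; first by rewrite scaler0.
  by case: no_row; exists j.
by move/rowP/(_ (Ordinal n_gt0)); rewrite !mxE => /eqP; rewrite oner_eq0.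
Qed.

Lemma directed_spanning_gt1 : (0 < n)%N ->
  (forall x, directed_spanning W x) -> (1 < m)%N.
Proof.
move=> n_gt0 span; have [j _ _] := directed_spanning_active_row_neq0 n_gt0 (span 0).
have [j' j'_act j'_neq0] :=
  directed_spanning_active_row_neq0 n_gt0 (span (- (row j W)^T)).
rewrite ltnNge; apply/negP => m_le1.
have j'j : j' = j by apply: val_inj => /=; have := ltn_ord j; have := ltn_ord j'; lia.
by rewrite j'j in j'_act j'_neq0; rewrite row_active_at_opp_row ?eqxx in j'_neq0.
Qed.

Lemma CW_le_half : (1 < m)%N -> CW W <= min_active_sigma / 2.
Proof.
move=> m_gt1.
have two_le_sqrt : 2 <= Num.sqrt (2 * m%:R) :> R.
  rewrite -[leLHS]ger0_norm // -sqrtr_sqr ler_sqrt ?mulr_ge0 //.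
  by rewrite expr2 ler_wpM2l // ler_nat.
rewrite CWE mulrC ler_wpM2l ?min_active_sigma_ge0 // lef_pV2 ?posrE //.
exact: lt_le_trans two_le_sqrt.
Qed.

End ActiveRows.
End LowerLipschitz.

Theorem theorem3 (R : realType) (m n : nat) (W : 'M[R]_(m, n))
  (hspan : forall x : 'cV[R]_n, directed_spanning W x) :
  (exists2 C : R, 0 < C &
     forall x0 x1 : 'cV[R]_n,
       C * norm2 (x0 - x1) <= norm2 (relu (W *m x0) - relu (W *m x1)))
  /\ (forall x0 x1 : 'cV[R]_n,
       CW W * norm2 (x0 - x1) <= norm2 (relu (W *m x0) - relu (W *m x1)))
  /\ ((0 < n)%N -> 0 < CW W).
Proof.
have [n0|n_gt0] := posnP n.
  subst n; have trivial_bound (C : R) (x0 x1 : 'cV[R]_0) :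
      C * norm2 (x0 - x1) <= norm2 (relu (W *m x0) - relu (W *m x1)).
    by rewrite norm2_cV0 mulr0 norm2_ge0.
  by split; [exists 1 | split].
have m_gt1 := directed_spanning_gt1 n_gt0 hspan.
have mu_gt0 := min_active_sigma_gt0 n_gt0 hspan.
have CW_gt0 : 0 < CW W.
  by rewrite CWE mulr_gt0 // invr_gt0 sqrtr_gt0 mulr_gt0 // ltr0n ltnW.
have CW_bound x0 x1 :
    CW W * norm2 (x0 - x1) <= norm2 (relu (W *m x0) - relu (W *m x1)).
  rewrite -(ler_pM2l (@ltr0n R 2)); apply: le_trans (min_active_sigma_lipschitz _ _ _).
  rewrite mulrA ler_wpM2r ?norm2_ge0 // mulrC -ler_pdivlMr //.
  exact: CW_le_half.
by split; [exists (CW W) | split].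
Qed.
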